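(* Let $\mathcal I=\mathbb R^d$ with the standard inner product, let $\mathcal G$ be a compact Abelian group with normalized Haar measure $dg$ acting on $\mathcal I$ by a unitary representation, and let $\mathcal S$ be the unit sphere of $\mathcal I$ with normalized uniform measure $u$. For $I\in\mathcal I$ and $t\in\mathcal S$ let $\mu^t(I)$ be the cumulative distribution function of the law of $g\mapsto\langle I,gt\rangle$ on $(\mathcal G,dg)$, i.e. $\mu^t(I)(b)=\int H(b-\langle I,gt\rangle)\,dg$. Let $d_\infty(f,f')=\sup_{s\in\mathbb R}|f(s)-f'(s)|$ and define $$d(I,I')=\int d_\infty(\mu^t(I),\mu^t(I'))\,du(t),\qquad \widehat d(I,I')=\frac1k\sum_{i=1}^k d_\infty(\mu^{t_i}(I),\mu^{t_i}(I')),$$ where $t_1,\dots,t_k$ are templates drawn independently from $u$. Consider a set $\mathcal I_n$ of $n$ points of $\mathcal I$. There is a constant $c$ such that if $k\ge\frac{2}{c\epsilon^2}\log\frac n\delta$, then with probability $1-\delta^2$, $$|d(I,I')-\widehat d(I,I')|\le\epsilon\quad\text{for all } I,I'\in\mathcal I_n.$$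
   Context: $H$ is the Heaviside step function. *)

From HB Require Import structures.
From mathcomp Require Import all_boot all_order all_algebra.
From mathcomp Require Import all_classical all_reals all_analysis.
Set Implicit Arguments. Unset Strict Implicit. Unset Printing Implicit Defensive.
Import Order.TTheory GRing.Theory Num.Theory.
Import numFieldNormedType.Exports.
Local Open Scope classical_set_scope.
Local Open Scope ring_scope.

Section defs.
Variable R : realType.

(* Heaviside step function, H(x) = 1 for x >= 0 (so that mu^t(I) is a CDF). *)
Definition heaviside (x : R) : R := if 0 <= x then 1 else 0.

(* Vectors of R^d are d.-tuples (product sigma-algebra of Borel sets). *)
Definition dotp (d : nat) (x y : d.-tuple R) : R :=
  \sum_(i < d) tnth x i * tnth y i.

Definition mact (d : nat) (M : 'M[R]_d) (x : d.-tuple R) : d.-tuple R :=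
  [tuple \sum_(j < d) M i j * tnth x j | i < d].

Definition orthogonal_mx (d : nat) (M : 'M[R]_d) : Prop := M *m M^T = 1%:M.

Definition unit_sphere (d : nat) : set (d.-tuple R) := [set t | dotp t t = 1].

(* u is the normalized uniform measure on the unit sphere: the probability
   measure on R^d carried by the sphere and invariant under all orthogonal
   transformations. *)
Definition uniform_on_sphere (d : nat)
  (u : probability (d.-tuple R) R) : Prop :=
  u (@unit_sphere d) = 1%E /\
  forall Q : 'M[R]_d, orthogonal_mx Q ->
    forall A : set (d.-tuple R), measurable A -> u (mact Q @^-1` A) = u A.

Definition mutually_independent dO (O : measurableType dO) (P : probability O R)
  dT (T : measurableType dT) (k : nat) (X : 'I_k -> O -> T) : Prop :=
  forall A : 'I_k -> set T, (forall i, measurable (A i)) ->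
    P (\bigcap_(i in [set: 'I_k]) (X i @^-1` A i)) =
    (\prod_(i < k) P (X i @^-1` A i))%E.

Definition dinf (f f' : R -> R) : R := sup (range (fun s => `|f s - f' s|)).

End defs.

Definition gcarrier (G : topologicalZmodType) : Type := G.
HB.instance Definition _ (G : topologicalZmodType) :=
  Choice.on (gcarrier G).
HB.instance Definition _ (G : topologicalZmodType) :=
  isPointed.Build (gcarrier G) (0%R : G).
Notation gborel G := (@g_sigma_algebraType (gcarrier G) (@open G)).

Section group_defs.
Variables (R : realType) (G : topologicalZmodType).

Definition haar_prob (PG : probability (gborel G) R) : Prop :=
  forall (g : G) (A : set (gborel G)), measurable A ->
    PG ((fun x : G => g + x) @^-1` A) = PG A.

Definition orth_rep (d : nat) (rho : G -> 'M[R]_d) : Prop :=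
  [/\ rho 0 = 1%:M,
      forall g h, rho (g + h) = rho g *m rho h,
      forall g, orthogonal_mx (rho g) &
      forall i j, continuous (fun g => rho g i j)].

Definition mu_cdf (d : nat) (PG : probability (gborel G) R) (rho : G -> 'M[R]_d)
  (t I : d.-tuple R) (b : R) : R :=
  fine (\int[PG]_(g in [set: gborel G])
          (heaviside (b - dotp I (mact (rho (g : G)) t)))%:E).

Definition dist_mu (d : nat) (PG : probability (gborel G) R) (rho : G -> 'M[R]_d)
  (u : probability (d.-tuple R) R) (I I' : d.-tuple R) : R :=
  fine (\int[u]_(t in [set: d.-tuple R])
          (dinf (mu_cdf PG rho t I) (mu_cdf PG rho t I'))%:E).

Definition dist_hat (d k : nat) (PG : probability (gborel G) R) (rho : G -> 'M[R]_d)
  (ts : 'I_k -> d.-tuple R) (I I' : d.-tuple R) : R :=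
  k%:R^-1 * \sum_(i < k) dinf (mu_cdf PG rho (ts i) I) (mu_cdf PG rho (ts i) I').

End group_defs.

From HB Require Import structures.
From mathcomp Require Import all_boot all_order all_algebra.
From mathcomp Require Import all_classical all_reals all_analysis.
From mathcomp Require Import measurable_realfun lra ring.
Import Order.TTheory GRing.Theory Num.Theory.
Import numFieldNormedType.Exports.
Local Open Scope classical_set_scope.
Local Open Scope ring_scope.

Set Implicit Arguments.
Unset Strict Implicit.
Unset Printing Implicit Defensive.

(* For fixed I and I', the map t |-> d_infty(mu^t(I), mu^t(I')) is measurable with values in
   [0, 1]: CDFs are nondecreasing and right-continuous, so the supremum defining d_infty may be
   taken over the countably many rational thresholds.  Hence d(I, I') is the mean of this
   variable under u and \hat d(I, I') the empirical mean of k independent samples of it.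
   Rounding the variable up to a grid of mesh at most eps/2 makes it finitely valued; for the
   rounded variable independence gives the law of the sample exactly, and a Chernoff bound with
   E exp(lam (Z - E Z)) <= 1 + 2 lam^2 yields P(|mean - empirical mean| > eps) <=
   2 exp(-k eps^2/32).  With c = 1/64 the hypothesis on k makes this at most 2 (delta/n)^4,
   and a union bound over the n(n-1) pairs of distinct points gives at most delta^2. *)

Lemma itv01_normB_le1 (R : realDomainType) (x y : R) :
  0 <= x <= 1 -> 0 <= y <= 1 -> `|x - y| <= 1.
Proof. by move=> /andP[? ?] /andP[? ?]; apply/ler_normlP; split; lra. Qed.

Section sup_distance.
Variable R : realType.
Implicit Types (f g : R -> R) (B : R).

Lemma dinf_ge f g B s0 : (forall s, `|f s - g s| <= B) -> `|f s0 - g s0| <= dinf f g.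
Proof.
move=> fgB; apply: ub_le_sup; last by exists s0.
by exists B => _ [x _ <-].
Qed.

Lemma dinf_le f g B : (forall s, `|f s - g s| <= B) -> dinf f g <= B.
Proof.
move=> fgB; apply: ge_sup; first by exists `|f 0 - g 0|, 0.
by move=> _ [x _ <-].
Qed.

Lemma dinfxx f : dinf f f = 0.
Proof.
rewrite /dinf; have -> : range (fun s => `|f s - f s|) = [set 0] :> set R.
  by apply/seteqP; split=> [_ [s _ <-]|_ ->]; [|exists 0] => //; rewrite subrr normr0.
exact: sup1.
Qed.

Lemma dinf_itv01 f g : (forall s, 0 <= f s <= 1) -> (forall s, 0 <= g s <= 1) ->
  0 <= dinf f g <= 1.
Proof.
move=> f01 g01; have fg1 s : `|f s - g s| <= 1 by exact: itv01_normB_le1.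
by rewrite (le_trans _ (@dinf_ge _ _ _ 0 fg1)) ?dinf_le.
Qed.

Definition rat_enum (n : nat) : R := ratr (odflt 0 (unpickle n)).

Lemma rat_enum_pickle (q : rat) : rat_enum (pickle q) = ratr q.
Proof. by rewrite /rat_enum pickleK. Qed.

Section rational_thresholds.
Variables (f g : R -> R) (B : R).
Hypotheses (f_nd : {homo f : x y / x <= y}) (g_nd : {homo g : x y / x <= y}).
Hypotheses (f_rc : forall s e, 0 < e -> exists2 r, s < r & f r <= f s + e)
           (g_rc : forall s e, 0 < e -> exists2 r, s < r & g r <= g s + e).
Hypothesis fgB : forall s, `|f s - g s| <= B.

Lemma dinf_rat_enumE :
  dinf f g = sup (range (fun n => `|f (rat_enum n) - g (rat_enum n)|)).
Proof.
set S := range _; have S_ub : has_ubound S by exists B => _ [n _ <-].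
apply/le_anti/andP; split; last first.
  by apply: ge_sup => [|_ [n _ <-]]; [exists `|f (rat_enum 0) - g (rat_enum 0)|, 0%N|
                                       exact: dinf_ge].
apply: dinf_le => s; apply/ler_addgt0Pr => e e0.
have e20 : 0 < e / 2 by rewrite divr_gt0.
have [rf sf frf] := f_rc s e20; have [rg sg grg] := g_rc s e20.
have [q] : exists q, ratr q \in `]s, Num.min rf rg[.
  by apply: rat_in_itvoo; rewrite lt_min sf sg.
rewrite in_itv /= lt_min => /andP[sq /andP[qf qg]].
have fq : f s <= f (ratr q) <= f s + e / 2.
  by rewrite f_nd ?(ltW sq) // (le_trans (f_nd (ltW qf)) frf).
have gq : g s <= g (ratr q) <= g s + e / 2.
  by rewrite g_nd ?(ltW sq) // (le_trans (g_nd (ltW qg)) grg).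
have : `|f (ratr q) - g (ratr q)| <= sup S.
  by apply: ub_le_sup => //; exists (pickle q); rewrite ?rat_enum_pickle.
move: fq gq => /andP[? ?] /andP[? ?] /ler_normlP[? ?]; apply/ler_normlP; split; lra.
Qed.

End rational_thresholds.
End sup_distance.

Section template_cdf.
Variables (R : realType) (G : topologicalZmodType) (PG : probability (gborel G) R).
Variables (d : nat) (rho : G -> 'M[R]_d).
Hypothesis rho_cont : forall i j, continuous (fun g => rho g i j).

Lemma measurable_rho_entry i j : measurable_fun setT (fun g : gborel G => rho g i j).
Proof.
apply: (measurability _ (RGenOpens.measurableE R)).
move=> _ [_ [a [b ->]] <-]; rewrite setTI; apply: sub_sigma_algebra => /=.
by apply: (continuousP _).1; [exact: rho_cont | exact: interval_open].
Qed.

Definition orbit_coord (I : d.-tuple R) (p : gborel G * d.-tuple R) : R :=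
  dotp I (mact (rho p.1) p.2).

Lemma measurable_orbit_coord I : measurable_fun setT (orbit_coord I).
Proof.
rewrite /orbit_coord /dotp.
apply: measurable_sum => i; apply: measurable_funM; first exact: measurable_cst.
under eq_fun do rewrite tnth_mktuple.
apply: measurable_sum => j; apply: measurable_funM.
  exact: measurableT_comp (measurable_rho_entry i j) measurable_fst.
exact: measurableT_comp (measurable_tnth j) measurable_snd.
Qed.

Definition orbit_sublevel (I : d.-tuple R) (b : R) : set (gborel G * d.-tuple R) :=
  [set p | orbit_coord I p <= b].

Lemma measurable_orbit_sublevel I b : measurable (orbit_sublevel I b).
Proof.
rewrite -[orbit_sublevel _ _]setTI.
by apply: measurable_fun_le => //; exact: measurable_orbit_coord.
Qed.

Lemma ysection_orbit_sublevel I b t :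
  ysection (orbit_sublevel I b) t = [set g | orbit_coord I (g, t) <= b].
Proof. by apply/seteqP; split => g; rewrite /ysection /= in_setE. Qed.

Lemma measurable_orbit_section I b t : measurable [set g | orbit_coord I (g, t) <= b].
Proof.
by rewrite -ysection_orbit_sublevel; apply: measurable_ysection; exact: measurable_orbit_sublevel.
Qed.

Lemma mu_cdfE t I b : mu_cdf PG rho t I b = fine (PG [set g | orbit_coord I (g, t) <= b]).
Proof.
rewrite /mu_cdf (eq_integral (fun g => (\1_[set g | orbit_coord I (g, t) <= b] g)%:E)).
  by rewrite integral_indic ?setIT //; exact: measurable_orbit_section.
move=> g _; rewrite /heaviside indicE subr_ge0 (_ : (g \in _) = (orbit_coord I (g, t) <= b)).
  by case: ifP.
by apply/idP/idP; rewrite in_setE.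
Qed.

Lemma mu_cdf_itv01 t I b : 0 <= mu_cdf PG rho t I b <= 1.
Proof.
have mS := measurable_orbit_section I b t.
rewrite mu_cdfE fine_ge0 //= -lee_fin fineK ?fin_num_measure //.
exact: probability_le1.
Qed.

Lemma mu_cdf_nondecreasing t I : {homo mu_cdf PG rho t I : b b' / b <= b'}.
Proof.
move=> b b' bb'; have mS := measurable_orbit_section I _ t.
rewrite !mu_cdfE; apply: fine_le; rewrite ?fin_num_measure //.
by apply: le_measure; rewrite ?inE // => g /= /le_trans; apply.
Qed.

(* PG is continuous from above along the sublevel sets at b + 1/(N+1). *)
Lemma mu_cdf_right_cont t I b e : 0 < e ->
  exists2 r, b < r & mu_cdf PG rho t I r <= mu_cdf PG rho t I b + e.
Proof.
move=> e0; pose F n := [set g | orbit_coord I (g, t) <= b + n.+1%:R^-1].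
have mF n : measurable (F n) := measurable_orbit_section I _ t.
have mS := measurable_orbit_section I b t.
have F_nonincr : nonincreasing_seq F.
  move=> m n mn; apply/subsetPset => g /= /le_trans; apply.
  by rewrite lerD2l lef_pV2 ?posrE // ler_nat.
have capF : \bigcap_n F n = [set g | orbit_coord I (g, t) <= b].
  apply/seteqP; split => g /=; last first.
    by move=> gb n _; apply: le_trans gb _; rewrite lerDl.
  move=> gF; apply/ler_addgt0Pr => e' e'0.
  apply: le_trans (gF (Num.truncn e'^-1) Logic.I) _.
  rewrite lerD2l ltW // -[e' in _ < e']invrK.
  by rewrite ltf_pV2 ?posrE ?invr_gt0 ?ltr0n // truncnS_gt.
have PF0 : (PG (F 0%N) < +oo)%E.
  exact: le_lt_trans (probability_le1 PG (mF 0%N)) (ltry 1).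
have := nonincreasing_cvg_mu PF0 mF _ F_nonincr.
rewrite capF => /(_ mS); rewrite -[X in _ --> X]fineK ?fin_num_measure // => /fine_cvgP[_].
move=> /cvgr_dist_le /(_ e e0) [N _ /(_ N (leqnn N))] /ler_normlP[FN _].
exists (b + N.+1%:R^-1); first by rewrite ltrDl.
rewrite !mu_cdfE; rewrite /= -/(F N) in FN; lra.
Qed.

Lemma measurable_mu_cdf I b : measurable_fun setT (fun t => mu_cdf PG rho t I b).
Proof.
have -> : (fun t => mu_cdf PG rho t I b) = fine \o (PG \o ysection (orbit_sublevel I b)).
  by apply/funext => t; rewrite mu_cdfE /= ysection_orbit_sublevel.
apply: measurableT_comp => //.
exact: measurable_fun_ysection (measurable_orbit_sublevel I b).
Qed.

Definition template_dist (I I' t : d.-tuple R) : R :=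
  dinf (mu_cdf PG rho t I) (mu_cdf PG rho t I').

Lemma template_dist_itv01 I I' t : 0 <= template_dist I I' t <= 1.
Proof. by apply: dinf_itv01 => s; exact: mu_cdf_itv01. Qed.

Lemma measurable_template_dist I I' : measurable_fun setT (template_dist I I').
Proof.
pose h n t := `|mu_cdf PG rho t I (rat_enum R n) - mu_cdf PG rho t I' (rat_enum R n)|.
have h1 t n : h n t <= 1 by exact: itv01_normB_le1 (mu_cdf_itv01 _ _ _) (mu_cdf_itv01 _ _ _).
have -> : template_dist I I' = fun t => sups (h ^~ t) 0%N.
  apply/funext => t; rewrite /template_dist (@dinf_rat_enumE _ _ _ 1).
  - by rewrite /sups; congr sup; apply/seteqP; split => _ [n _ <-]; exists n.
  - exact: mu_cdf_nondecreasing.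
  - exact: mu_cdf_nondecreasing.
  - exact: mu_cdf_right_cont.
  - exact: mu_cdf_right_cont.
  - by move=> s; exact: itv01_normB_le1 (mu_cdf_itv01 _ _ _) (mu_cdf_itv01 _ _ _).
apply: measurable_fun_sups => [t _|n]; first by exists 1 => _ [n _ <-].
apply: measurableT_comp (@normr_measurable R setT) _.
by apply: measurable_funB; exact: measurable_mu_cdf.
Qed.

End template_cdf.

Lemma le_measure_bigsetU d (T : measurableType d) (R : realType)
    (mu : {measure set T -> \bar R}) (I : Type) (r : seq I) (P : pred I) (F : I -> set T) :
  (forall i, measurable (F i)) ->
  (mu (\big[setU/set0]_(i <- r | P i) F i) <= \sum_(i <- r | P i) mu (F i))%E.
Proof.
move=> mF; elim: r => [|a r IHr]; first by rewrite !big_nil measure0.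
rewrite !big_cons; case: (P a) => //.
by apply: le_trans (measureU2 _ _ _) (leeD _ IHr) => //; exact: bigsetU_measurable.
Qed.

Lemma expR_le_quadratic (R : realType) (x : R) : x <= 1 / 2 -> expR x <= 1 + x + 2 * x ^+ 2.
Proof.
move=> x_le; have ex_gt0 := expR_gt0 x.
have exN : 1 - x <= expR (- x) by have := expR_ge1Dx (- x).
have exK : expR x * expR (- x) = 1 by rewrite -expRD addrN expR0.
have : 1 <= (1 - x) * (1 + x + 2 * x ^+ 2) by nra.
nra.
Qed.

Section empirical_mean.
Variables (R : realType) (d : measure_display) (T : measurableType d).

Definition mean (u : probability T R) (Y : T -> R) : R :=
  fine (\int[u]_(t in [set: T]) (Y t)%:E).

Definition emp_mean {k : nat} (Y : T -> R) (xs : 'I_k -> T) : R :=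
  k%:R^-1 * \sum_(i < k) Y (xs i).

Variables (u : probability T R) (Y : T -> R).
Hypotheses (mY : measurable_fun setT Y) (Y01 : forall t, 0 <= Y t <= 1).

Let integral_Y_ge0 : (0 <= \int[u]_(t in [set: T]) (Y t)%:E)%E.
Proof. by apply: integral_ge0 => t _; rewrite lee_fin; case/andP: (Y01 t). Qed.

Let integral_Y_le1 : (\int[u]_(t in [set: T]) (Y t)%:E <= 1)%E.
Proof.
apply: (@le_trans _ _ (\int[u]_(t in [set: T]) (cst 1%:E t))%E).
  apply: ge0_le_integral => //; first by move=> t _; rewrite lee_fin; case/andP: (Y01 t).
    exact/measurable_EFinP.
  by move=> t _; rewrite lee_fin; case/andP: (Y01 t).
by rewrite integral_cst // [X in (_ * X)%E]probability_setT mul1e.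
Qed.

Lemma mean_fin_num : (\int[u]_(t in [set: T]) (Y t)%:E)%E \is a fin_num.
Proof. by rewrite ge0_fin_numE // (le_lt_trans integral_Y_le1) ?ltry. Qed.

Lemma mean_itv01 : 0 <= mean u Y <= 1.
Proof. by rewrite fine_ge0 //= -lee_fin fineK ?mean_fin_num. Qed.

Lemma emp_mean_itv01 k (xs : 'I_k -> T) : 0 <= emp_mean Y xs <= 1.
Proof.
case: k xs => [|k] xs; first by rewrite /emp_mean big_ord0 mulr0 lexx ler01.
rewrite /emp_mean mulr_ge0 ?invr_ge0 ?sumr_ge0 //=; last by move=> i _; case/andP: (Y01 (xs i)).
rewrite ler_pdivrMl ?ltr0n // mulr1 -[k.+1 in leRHS]card_ord -sumr_const.
by apply: ler_sum => i _; case/andP: (Y01 (xs i)).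
Qed.

End empirical_mean.

Section discretization.
Variables (R : realType) (d : measure_display) (T : measurableType d).
Variables (u : probability T R) (Y : T -> R).
Hypotheses (mY : measurable_fun setT Y) (Y01 : forall t, 0 <= Y t <= 1).
Variable M : nat.
Hypothesis M_gt0 : (0 < M)%N.

Definition level (m : 'I_M.+1) : R := m%:R / M%:R.

Definition level_set (m : 'I_M.+1) : set T := [set t | m%:R - 1 < Y t * M%:R <= m%:R].

Lemma measurable_level_set m : measurable (level_set m).
Proof.
rewrite -[level_set m]setTI (_ : level_set m = (fun t => Y t * M%:R) @^-1` `]m%:R - 1, m%:R]).
  by apply: (measurable_funM mY (measurable_cst _)) => //; exact: measurable_itv.
by apply/seteqP; split => t /=; rewrite in_itv.
Qed.

Lemma level_set_cover t : exists m, level_set m t.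
Proof.
have YM_le n : (M <= n)%N -> Y t * M%:R <= n%:R.
  by case/andP: (Y01 t) => _ Y1 Mn; rewrite (le_trans (ler_piMl _ Y1)) ?ler_nat.
have YM_ex : exists n, Y t * M%:R <= n%:R by exists M; exact: YM_le.
have [m YMm m_min] := ex_minnP YM_ex.
have mM : (m < M.+1)%N by rewrite ltnS m_min ?YM_le.
exists (Ordinal mM); rewrite /level_set /= YMm andbT.
case: m YMm m_min {mM} => [|m] _ m_min.
  by case/andP: (Y01 t) => Y0 _; rewrite sub0r (lt_le_trans (ltrN10 _)) ?mulr_ge0.
rewrite -natr1 addrK ltNge; apply/negP => /m_min; by rewrite ltnn.
Qed.

Lemma level_set_uniq t m m' : level_set m t -> level_set m' t -> m = m'.
Proof.
rewrite /level_set /= => /andP[lo hi] /andP[lo' hi']; apply/val_inj/eqP.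
have lt_mm' : (m%:R : R) < m'%:R + 1 by lra.
have lt_m'm : (m'%:R : R) < m%:R + 1 by lra.
by rewrite eqn_leq -ltnS -(ltr_nat R) -natr1 lt_mm' -ltnS -(ltr_nat R) -natr1.
Qed.

Definition level_of (t : T) : 'I_M.+1 := projT1 (cid (level_set_cover t)).

Lemma level_ofP t : level_set (level_of t) t.
Proof. exact: projT2 (cid (level_set_cover t)). Qed.

Lemma level_of_bound t : Y t <= level (level_of t) <= Y t + M%:R^-1.
Proof.
have /andP[lo hi] := level_ofP t; have M_gt0' : (0 : R) < M%:R by rewrite ltr0n.
rewrite /level ler_pdivlMr // hi ler_pdivrMr // mulrDl mulVf ?gt_eqF //; lra.
Qed.

Lemma level_ge0 m : 0 <= level m.
Proof. by rewrite /level divr_ge0. Qed.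

Lemma level_le1 m : level m <= 1.
Proof. by rewrite /level ler_pdivrMr ?ltr0n // mul1r ler_nat -ltnS. Qed.

Definition level_prob (m : 'I_M.+1) : R := fine (u (level_set m)).

Lemma level_probE m : u (level_set m) = (level_prob m)%:E.
Proof. by rewrite fineK // fin_num_measure //; exact: measurable_level_set. Qed.

Lemma level_prob_ge0 m : 0 <= level_prob m.
Proof. exact: fine_ge0. Qed.

Lemma sum_level_indic (c : 'I_M.+1 -> R) t :
  \sum_(m < M.+1) c m * \1_(level_set m) t = c (level_of t).
Proof.
rewrite (bigD1 (level_of t)) //= big1 ?addr0 => [|m m_neq].
  by rewrite indicE mem_set ?mulr1 //; exact: level_ofP.
rewrite indicE memNset ?mulr0 // => tm.
by move: m_neq; rewrite (level_set_uniq tm (level_ofP t)) eqxx.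
Qed.

Lemma integral_level_of (c : 'I_M.+1 -> R) : (forall m, 0 <= c m) ->
  (\int[u]_(t in [set: T]) (c (level_of t))%:E = (\sum_(m < M.+1) c m * level_prob m)%:E)%E.
Proof.
move=> c_ge0; have mL := measurable_level_set.
under eq_integral do rewrite -sum_level_indic -sumEFin.
rewrite ge0_integral_sum // => [|m|m t _]; last first.
- by rewrite lee_fin mulr_ge0 // indicE.
- by apply/measurable_EFinP/measurable_funM; [exact: measurable_cst | exact: measurable_indic].
rewrite -sumEFin; apply: eq_bigr => m _; under eq_integral do rewrite EFinM.
rewrite ge0_integralZl ?lee_fin //; last exact/measurable_EFinP/measurable_indic.
by rewrite integral_indic // setIT EFinM -level_probE.
Qed.

Lemma sum_level_prob : \sum_(m < M.+1) level_prob m = 1.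
Proof.
have := @integral_level_of (fun=> 1) (fun=> ler01).
rewrite integral_cst // [X in (_ * X)%E]probability_setT mul1e.
by under eq_bigr do rewrite mul1r; move=> [].
Qed.

Definition rounded_mean : R := \sum_(m < M.+1) level_prob m * level m.

Lemma rounded_mean_itv01 : 0 <= rounded_mean <= 1.
Proof.
rewrite sumr_ge0 => [|m _]; last by rewrite mulr_ge0 ?level_prob_ge0 ?level_ge0.
rewrite -sum_level_prob; apply: ler_sum => m _.
by rewrite ler_piMr ?level_prob_ge0 ?level_le1.
Qed.

Lemma measurable_rounded : measurable_fun setT (fun t => level (level_of t)).
Proof.
rewrite -(funext (sum_level_indic level)); apply: measurable_sum => m.
by apply: measurable_funM => //; exact/measurable_indic/measurable_level_set.
Qed.

Lemma integral_rounded :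
  (\int[u]_(t in [set: T]) (level (level_of t))%:E = rounded_mean%:E)%E.
Proof.
rewrite integral_level_of; last exact: level_ge0.
by congr (_%:E); apply: eq_bigr => m _; rewrite mulrC.
Qed.

Lemma rounded_mean_bound : mean u Y <= rounded_mean <= mean u Y + M%:R^-1.
Proof.
have Y0 t : (0 <= (Y t)%:E)%E by rewrite lee_fin; case/andP: (Y01 t).
have mYE : measurable_fun setT (fun t => (Y t)%:E) by exact/measurable_EFinP.
have mR : measurable_fun setT (fun t => (level (level_of t))%:E).
  exact/measurable_EFinP/measurable_rounded.
rewrite /mean -!lee_fin ?EFinD fineK ?mean_fin_num // -integral_rounded.
apply/andP; split.
  apply: ge0_le_integral => // t _.
  by case/andP: (level_of_bound t); rewrite lee_fin.
rewrite -[X in (_ + X)%E]mule1 -[X in (_ * X)%E](probability_setT u) -integral_cst //.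
rewrite -ge0_integralD //; last by move=> t _; rewrite lee_fin invr_ge0.
apply: ge0_le_integral => //.
- by move=> t _; rewrite lee_fin level_ge0.
- by apply: emeasurable_funD => //; exact: measurable_cst.
- by move=> t _; case/andP: (level_of_bound t) => _; rewrite -EFinD lee_fin.
Qed.

Lemma mgf_rounded_le lam : `|lam| <= 1 / 4 ->
  \sum_(m < M.+1) level_prob m * expR (lam * (level m - rounded_mean)) <= 1 + 2 * lam ^+ 2.
Proof.
move=> lam_small; have dev1 m : `|level m - rounded_mean| <= 1.
  by apply: itv01_normB_le1 rounded_mean_itv01; rewrite level_ge0 level_le1.
apply: (@le_trans _ _ (\sum_(m < M.+1)
    level_prob m * (1 + lam * (level m - rounded_mean) + 2 * lam ^+ 2))).
  apply: ler_sum => m _; rewrite ler_wpM2l ?level_prob_ge0 //.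
  move: lam_small (dev1 m); rewrite !ler_norml => /andP[? ?] /andP[? ?].
  apply: le_trans (expR_le_quadratic _) _; first by nra.
  by rewrite lerD2l ler_wpM2l // exprMn ler_piMr ?sqr_ge0 //; nra.
rewrite (_ : \sum_(m < M.+1) _ = (1 + 2 * lam ^+ 2) * \sum_(m < M.+1) level_prob m
    + lam * (\sum_(m < M.+1) level_prob m * level m
             - rounded_mean * \sum_(m < M.+1) level_prob m)); last first.
  by rewrite mulrBr !mulr_sumr -sumrB -big_split; apply: eq_bigr => m _ /=; ring.
by rewrite sum_level_prob !mulr1 /rounded_mean subrr mulr0 addr0.
Qed.

Variables (dO : measure_display) (O : measurableType dO) (P : probability O R).
Variables (k : nat) (X : 'I_k -> O -> T).
Hypothesis mX : forall i, measurable_fun setT (X i).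
Hypothesis lawX : forall i (A : set T), measurable A -> P (X i @^-1` A) = u A.
Hypothesis indX : mutually_independent P X.

Definition cylinder (s : {ffun 'I_k -> 'I_M.+1}) : set O :=
  \bigcap_(i in [set: 'I_k]) (X i @^-1` level_set (s i)).

Lemma measurable_cylinder s : measurable (cylinder s).
Proof.
apply: fin_bigcap_measurable; first exact: finite_finset.
move=> i _; rewrite -[_ @^-1` _]setTI; apply: mX => //; exact: measurable_level_set.
Qed.

Lemma cylinder_prob s : P (cylinder s) = (\prod_(i < k) level_prob (s i))%:E.
Proof.
rewrite /cylinder indX => [|i]; last exact: measurable_level_set.
rewrite -prodEFin; apply: eq_bigr => i _.
by rewrite lawX ?level_probE //; exact: measurable_level_set.
Qed.

Lemma sample_cylinder w : cylinder [ffun i => level_of (X i w)] w.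
Proof. by move=> i _; rewrite /= ffunE; exact: level_ofP. Qed.

Definition rounded_dev (s : {ffun 'I_k -> 'I_M.+1}) : R :=
  \sum_(i < k) (level (s i) - rounded_mean).

Lemma chernoff_rounded lam c : `|lam| <= 1 / 4 ->
  \sum_(s : {ffun 'I_k -> 'I_M.+1} | c <= lam * rounded_dev s) \prod_(i < k) level_prob (s i)
    <= expR (- c) * (1 + 2 * lam ^+ 2) ^+ k.
Proof.
(* 1_{c <= lam D} <= exp(lam D - c), and the resulting sum factorizes over the k coordinates. *)
move=> lam_small.
have p_ge0 (s : {ffun 'I_k -> 'I_M.+1}) : 0 <= \prod_(i < k) level_prob (s i).
  by apply: prodr_ge0 => i _; exact: level_prob_ge0.
apply: (@le_trans _ _ (\sum_(s : {ffun 'I_k -> 'I_M.+1})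
    (\prod_(i < k) level_prob (s i)) * expR (lam * rounded_dev s - c))).
  rewrite [leRHS](bigID (fun s => c <= lam * rounded_dev s)) /= -[leLHS]addr0 lerD //.
    apply: ler_sum => s c_le; rewrite ler_peMr // (le_trans _ (expR_ge1Dx _)) //.
    by rewrite lerDl subr_ge0.
  by apply: sumr_ge0 => s _; rewrite mulr_ge0 ?expR_ge0.
rewrite (_ : \sum_s _ = expR (- c) * \sum_(s : {ffun 'I_k -> 'I_M.+1})
    \prod_(i < k) (level_prob (s i) * expR (lam * (level (s i) - rounded_mean)))).
  rewrite -(bigA_distr_bigA (fun _ m => level_prob m * expR (lam * (level m - rounded_mean)))).
  rewrite prodr_const card_ord ler_wpM2l ?expR_ge0 // lerXn2r ?nnegrE ?mgf_rounded_le //.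
    by apply: sumr_ge0 => m _; rewrite mulr_ge0 ?level_prob_ge0 ?expR_ge0.
  by rewrite addr_ge0 // mulr_ge0 // sqr_ge0.
rewrite mulr_sumr; apply: eq_bigr => s _.
by rewrite addrC expRD mulrCA big_split /= /rounded_dev mulr_sumr expR_sum.
Qed.

Definition rounded_tail (lam c : R) : set O :=
  \big[setU/set0]_(s : {ffun 'I_k -> 'I_M.+1} | c <= lam * rounded_dev s) cylinder s.

Lemma measurable_rounded_tail lam c : measurable (rounded_tail lam c).
Proof. by apply: bigsetU_measurable => s _; exact: measurable_cylinder. Qed.

Lemma rounded_tail_prob lam c : `|lam| <= 1 / 4 ->
  (P (rounded_tail lam c) <= (expR (- c) * (1 + 2 * lam ^+ 2) ^+ k)%:E)%E.
Proof.
move=> lam_small; apply: le_trans (le_measure_bigsetU P _ _ measurable_cylinder) _.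
rewrite (eq_bigr (fun s : {ffun 'I_k -> 'I_M.+1} => (\prod_(i < k) level_prob (s i))%:E)).
  by rewrite sumEFin lee_fin chernoff_rounded.
by move=> s _; exact: cylinder_prob.
Qed.

Lemma rounded_tailN w lam c : ~ rounded_tail lam c w ->
  lam * rounded_dev [ffun i => level_of (X i w)] < c.
Proof.
move=> wN; rewrite ltNge; apply/negP => c_le; apply: wN.
by rewrite /rounded_tail (bigD1 [ffun i => level_of (X i w)]) //=; left; exact: sample_cylinder.
Qed.

Lemma emp_mean_close_rounded w eps : M%:R^-1 <= eps / 2 ->
  `|rounded_dev [ffun i => level_of (X i w)]| < k%:R * (eps / 2) ->
  `|mean u Y - emp_mean Y (X^~ w)| <= eps.
Proof.
move=> M_small; set K := k%:R; set SY := \sum_(i < k) Y (X i w).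
set SL := \sum_(i < k) level (level_of (X i w)).
have devE : rounded_dev [ffun i => level_of (X i w)] = SL - K * rounded_mean.
  by rewrite /rounded_dev sumrB sumr_const card_ord mulr_natl; under eq_bigr do rewrite ffunE.
rewrite devE => /ltr_normlP[dev_lo dev_hi].
have K_gt0 : 0 < K.
  by rewrite lt0r ler0n andbT; apply/eqP => K0; move: dev_lo dev_hi; rewrite K0 mul0r; lra.
have SY_le_SL : SY <= SL by apply: ler_sum => i _; case/andP: (level_of_bound (X i w)).
have SL_le : SL <= SY + K * M%:R^-1.
  have -> : K * M%:R^-1 = \sum_(i < k) M%:R^-1 by rewrite sumr_const card_ord mulr_natl.
  rewrite -big_split /=.
  by apply: ler_sum => i _; case/andP: (level_of_bound (X i w)).
have /andP[rm_lo rm_hi] := rounded_mean_bound.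
have K_rm_lo : K * mean u Y <= K * rounded_mean by rewrite ler_wpM2l ?(ltW K_gt0).
have K_rm_hi : K * rounded_mean <= K * mean u Y + K * M%:R^-1.
  by rewrite -mulrDr ler_wpM2l ?(ltW K_gt0).
have K_M : K * M%:R^-1 <= K * (eps / 2) by rewrite ler_wpM2l ?(ltW K_gt0).
rewrite /emp_mean -/K -/SY (_ : mean u Y - K^-1 * SY = K^-1 * (K * mean u Y - SY)).
  have KeE : eps * K = 2 * (K * (eps / 2)) by field.
  rewrite normrM ger0_norm ?invr_ge0 ?(ltW K_gt0) // mulrC ler_pdivrMr // KeE.
  by apply/ler_normlP; split; lra.
by field; rewrite gt_eqF.
Qed.

Lemma rounded_concentration eps : 0 < eps -> eps <= 1 -> M%:R^-1 <= eps / 2 ->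
  exists B : set O, [/\ measurable B,
    (P B <= (2 * expR (- (k%:R * eps ^+ 2) / 32))%:E)%E &
    forall w, ~ B w -> `|mean u Y - emp_mean Y (X^~ w)| <= eps].
Proof.
(* Chernoff on both tails with lam = eps/8:
   exp(-lam k eps/2) (1 + 2 lam^2)^k <= exp(-k eps^2/32). *)
move=> eps_gt0 eps_le1 M_small; set lam := eps / 8; set c := lam * (k%:R * (eps / 2)).
have lam_gt0 : 0 < lam by rewrite divr_gt0.
have tail_le lam' : `|lam'| = lam ->
    (P (rounded_tail lam' c) <= (expR (- (k%:R * eps ^+ 2) / 32))%:E)%E.
  move=> lam'E; apply: le_trans (rounded_tail_prob _ _) _; first by rewrite lam'E /lam; lra.
  rewrite lee_fin -real_normK ?num_real // lam'E.
  apply: le_trans (_ : expR (- c) * expR (2 * lam ^+ 2) ^+ k <= _).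
    apply: ler_wpM2l; first exact: expR_ge0.
    apply: lerXn2r; rewrite ?nnegrE ?expR_ge0 ?expR_ge1Dx //.
    by rewrite addr_ge0 // mulr_ge0 // sqr_ge0.
  rewrite -expRM_natl -expRD (_ : - c + _ = - (k%:R * eps ^+ 2) / 32) //.
  by rewrite /c /lam; field.
exists (rounded_tail lam c `|` rounded_tail (- lam) c); split.
- by apply: measurableU; exact: measurable_rounded_tail.
- apply: le_trans (measureU2 _ _ _) _; try exact: measurable_rounded_tail.
  by rewrite mulr_natl mulr2n EFinD leeD // tail_le // ?normrN gtr0_norm.
- move=> w w_good; apply: emp_mean_close_rounded => //; rewrite ltr_norml.
  have /rounded_tailN : ~ rounded_tail lam c w by move=> ?; apply: w_good; left.
  have /rounded_tailN : ~ rounded_tail (- lam) c w by move=> ?; apply: w_good; right.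
  by rewrite /c mulNr -mulrN !ltr_pM2l // => devN dev; rewrite dev ltrNl devN.
Qed.

End discretization.

Lemma concentration (R : realType) d (T : measurableType d) (u : probability T R)
    (Y : T -> R) dO (O : measurableType dO) (P : probability O R) k
    (X : 'I_k -> O -> T) eps :
  measurable_fun setT Y -> (forall t, 0 <= Y t <= 1) ->
  (forall i, measurable_fun setT (X i)) ->
  (forall i (A : set T), measurable A -> P (X i @^-1` A) = u A) ->
  mutually_independent P X -> 0 < eps ->
  exists B : set O, [/\ measurable B,
    (P B <= (2 * expR (- (k%:R * eps ^+ 2) / 32))%:E)%E &
    forall w, ~ B w -> `|mean u Y - emp_mean Y (X^~ w)| <= eps].
Proof.
move=> mY Y01 mX lawX indX eps_gt0; have [eps_le1|eps_gt1] := leP eps 1; last first.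
  exists set0; split => //; first by rewrite measure0 lee_fin mulr_ge0 ?expR_ge0.
  move=> w _; apply: le_trans (ltW eps_gt1).
  exact: itv01_normB_le1 (mean_itv01 u mY Y01) (emp_mean_itv01 Y01 (X^~ w)).
pose M := (Num.truncn (2 / eps)).+1.
have M_small : M%:R^-1 <= eps / 2.
  rewrite -[eps / 2]invf_div lef_pV2 ?posrE ?ltr0n ?divr_gt0 //.
  exact/ltW/truncnS_gt.
exact: (rounded_concentration mY Y01 (ltn0Sn _ : (0 < M)%N) mX lawX indX eps_gt0 eps_le1 M_small).
Qed.

Lemma sum_offdiag_const (V : nmodType) n (c : V) :
  \sum_(ab : 'I_n * 'I_n | ab.1 != ab.2) c = c *+ (n * n.-1).
Proof.
have row_sum (i : 'I_n) : \sum_(j < n | i != j) c = c *+ n.-1.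
  rewrite sumr_const -[n in n.-1]card_ord -(cardC1 i); congr (c *+ _).
  by apply: eq_card => j; rewrite !inE eq_sym.
transitivity (\sum_(i < n) \sum_(j < n | i != j) c).
  by rewrite (pair_big_dep xpredT (fun i j => i != j) (fun _ _ => c)); apply: eq_bigl.
by under eq_bigr do rewrite row_sum; rewrite sumr_const card_ord -mulrnA mulnC.
Qed.

Lemma union_bound_numeric (R : realType) (n : nat) (delta eps K : R) :
  0 < delta < 1 -> 0 < eps -> 2 / (1 / 64 * eps ^+ 2) * ln (n%:R / delta) <= K ->
  (n * n.-1)%:R * (2 * expR (- (K * eps ^+ 2) / 32)) <= delta ^+ 2.
Proof.
move=> /andP[delta_gt0 delta_lt1] eps_gt0 K_large.
have [n_le1|n_gt1] := leqP n 1.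
  by rewrite (_ : (n * n.-1)%N = 0%N) ?mul0r ?sqr_ge0 //; case: n n_le1 {K_large} => [|[]].
set q := n%:R / delta in K_large.
have n_ge2 : (2 : R) <= n%:R by rewrite ler_nat.
have nE : n%:R = q * delta by rewrite /q divfK ?gt_eqF.
have q_ge2 : 2 <= q by rewrite /q ler_pdivlMr //; apply: le_trans n_ge2; nra.
have K_ge : 128 * ln q <= K * eps ^+ 2.
  have eps2_gt0 : 0 < eps ^+ 2 by rewrite exprn_gt0.
  have -> : 128 * ln q = 2 / (1 / 64 * eps ^+ 2) * ln q * eps ^+ 2 by field; rewrite gt_eqF.
  by rewrite ler_wpM2r // ltW.
have exp_le : expR (- (K * eps ^+ 2) / 32) <= (q ^+ 4)^-1.
  rewrite -(lnK (lt_le_trans _ q_ge2)) // -expRM_natl -expRN ler_expR; lra.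
apply: (@le_trans _ _ ((q * delta) ^+ 2 * (2 * (q ^+ 4)^-1))).
  rewrite -nE ler_pM // ?mulr_ge0 ?expR_ge0 ?ler_wpM2l //.
  by rewrite -natrX ler_nat expnS mulnC leq_mul2r leq_pred orbT.
have -> : (q * delta) ^+ 2 * (2 * (q ^+ 4)^-1) = delta ^+ 2 * (2 / q ^+ 2).
  by field; rewrite gt_eqF // (lt_le_trans _ q_ge2).
by rewrite ler_piMr ?sqr_ge0 // ler_pdivrMr ?exprn_gt0 ?(lt_le_trans _ q_ge2) //; nra.
Qed.

Lemma dist_mu_hatxx (R : realType) (G : topologicalZmodType) (PG : probability (gborel G) R)
    d k (rho : G -> 'M[R]_d) (u : probability (d.-tuple R) R) (ts : 'I_k -> d.-tuple R) I :
  dist_mu PG rho u I I = 0 /\ dist_hat PG rho ts I I = 0.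
Proof.
rewrite /dist_mu /dist_hat; under eq_integral do rewrite dinfxx.
by under eq_bigr do rewrite dinfxx; rewrite integral0 big1 // mulr0.
Qed.

Lemma probability_setC_ge (R : realType) d (T : measurableType d) (P : probability T R)
    (A : set T) (x : R) :
  measurable A -> (P A <= x%:E)%E -> ((1 - x)%:E <= P (~` A))%E.
Proof.
move=> mA PA_le; rewrite probability_setC // -(fineK (fin_num_measure P _ mA)).
by rewrite -EFinB lee_fin lerD2l lerN2 -lee_fin fineK ?fin_num_measure.
Qed.

Theorem theorem6 (R : realType) :
  exists c : R, 0 < c /\
  forall (d : nat)
    (G : topologicalZmodType)
    (PG : probability (gborel G) R)
    (rho : G -> 'M[R]_d)
    (u : probability (d.-tuple R) R)
    (n : nat) (pts : 'I_n -> d.-tuple R)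
    (eps delta : R) (k : nat)
    (dO : measure_display) (O : measurableType dO) (P : probability O R)
    (T : 'I_k -> O -> d.-tuple R),
    compact [set: G] -> hausdorff_space G ->
    haar_prob PG ->
    orth_rep rho ->
    uniform_on_sphere u ->
    injective pts ->
    0 < eps -> 0 < delta ->
    (forall i, measurable_fun [set: O] (T i)) ->
    (forall i (A : set (d.-tuple R)), measurable A -> P (T i @^-1` A) = u A) ->
    mutually_independent P T ->
    2 / (c * eps ^+ 2) * ln (n%:R / delta) <= k%:R ->
    exists E : set O, [/\ measurable E,
      E `<=` [set w | forall i j : 'I_n,
                 `| dist_mu PG rho u (pts i) (pts j)
                    - dist_hat PG rho (fun l => T l w) (pts i) (pts j) | <= eps] &
      ((1 - delta ^+ 2)%:E <= P E)%E].
Proof.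
exists (1 / 64); split=> [|d G PG rho u n pts eps delta k dO O P T _ _ _ [_ _ _ rho_cont] _ _
  eps_gt0 delta_gt0 mT lawT indT k_large]; first by rewrite divr_gt0.
(* dist_mu and dist_hat unfold to mean and emp_mean of template_dist. *)
have /choice[B /all_and3[mB PB B_good]] : forall ab : 'I_n * 'I_n, exists B : set O,
    [/\ measurable B, (P B <= (2 * expR (- (k%:R * eps ^+ 2) / 32))%:E)%E &
      forall w, ~ B w -> `|mean u (template_dist PG rho (pts ab.1) (pts ab.2))
        - emp_mean (template_dist PG rho (pts ab.1) (pts ab.2)) (T^~ w)| <= eps].
  move=> ab; apply: concentration => //; first exact: measurable_template_dist.
  exact: template_dist_itv01.
pose U := \big[setU/set0]_(ab : 'I_n * 'I_n | ab.1 != ab.2) B ab.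
have mU : measurable U by exact: bigsetU_measurable.
exists (~` U); split; first exact: measurableC.
  move=> w wU i j; have [<-|ij] := eqVneq i j.
    by have [-> ->] := dist_mu_hatxx PG rho u (T^~ w) (pts i); rewrite subrr normr0 ltW.
  by apply: (B_good (i, j)) => wB; apply: wU; rewrite /U (bigD1 (i, j)) //=; left.
apply: probability_setC_ge => //; have [delta_ge1|delta_lt1] := leP 1 delta.
  by apply: le_trans (probability_le1 P mU) _; rewrite lee_fin exprn_ege1.
apply: le_trans (le_measure_bigsetU P _ _ mB) _.
apply: (@le_trans _ _ (\sum_(ab : 'I_n * 'I_n | ab.1 != ab.2)
    (2 * expR (- (k%:R * eps ^+ 2) / 32))%:E)%E); first by apply: lee_sum => ab _; exact: PB.
rewrite sumEFin lee_fin sum_offdiag_const -[_ *+ (n * _)]mulr_natl.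
by apply: union_bound_numeric; rewrite ?delta_gt0.
Qed.
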